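(* Let $B$ be a minimum-weight basis of the weighted uncertainty matroid $\mathcal{M}=(E,\mathcal{I},A,w)$. For $e\in E\setminus B$, let $C_e$ be the fundamental circuit of $e$ with respect to $B$, let $F_e=\{f\in C_e\setminus\{e\}: U_f>L_e\}$ and $\hat F_e=\{f\in C_e\setminus\{e\}: U_f>w_e\}$. A set $Q\subseteq E$ is a certificate of $B$ if and only if for every $e\in E\setminus B$ the following hold: 1. If $w_e\ge U_f$ for all $f\in C_e\setminus\{e\}$, and there exists $f'\in C_e\setminus\{e\}$ with $w_{f'}>L_e$, then $e\in Q$. 2. If $w_e\ge U_f$ for all $f\in C_e\setminus\{e\}$, and $w_f\le L_e$ for all $f\in C_e\setminus\{e\}$, then $e\in Q$ or $F_e\subseteq Q$. 3. If there exists $f\in C_e\setminus\{e\}$ with $w_e<U_f$, and there exists $f'\in C_e\setminus\{e\}$ (possibly $f'=f$) with $w_{f'}>L_e$, then $\hat F_e\cup\{e\}\subseteq Q$. 4. If there exists $f\in C_e\setminus\{e\}$ with $w_e<U_f$, and $w_{f'}\le L_e$ for all $f'\in C_e\setminus\{e\}$, then $F_e\subseteq Q$ or $\hat F_e\cup\{e\}\subseteq Q$.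
   Context: A weighted uncertainty matroid $\mathcal{M}=(E,\mathcal{I},A,w)$ consists of a matroid $M=(E,\mathcal{I})$ on a finite set $E$, for each $e\in E$ a non-empty finite union $A_e$ of bounded real intervals (each open or closed), and a weight $w_e\in A_e$. $L_e=\inf A_e$, $U_e=\sup A_e$. A minimum-weight basis is a basis of $M$ minimizing total weight. A weight assignment is $w^*$ with $w^*_e\in A_e$, consistent with $Q$ if $w^*_e=w_e$ on $Q$. $Q$ is a certificate of (verifies) a basis $B$ if for every weight assignment consistent with $Q$, $B$ is a minimum-weight basis with respect to it. For a basis $B$ and $e\notin B$, the fundamental circuit $C_e$ is the unique circuit contained in $B\cup\{e\}$. *)

From HB Require Import structures.
From mathcomp Require Import all_boot all_order all_algebra.
From mathcomp Require classical_sets.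
From mathcomp Require Import reals.
Set Implicit Arguments. Unset Strict Implicit. Unset Printing Implicit Defensive.
Import Order.TTheory GRing.Theory Num.Theory.
Local Open Scope ring_scope.

Definition is_matroid (T : finType) (indep : {set T} -> bool) : Prop :=
  [/\ indep set0,
      (forall X Y : {set T}, Y \subset X -> indep X -> indep Y) &
      (forall X Y : {set T}, indep X -> indep Y -> #|X| < #|Y| ->
         exists2 x, x \in Y :\: X & indep (x |: X))]%N.

Definition is_basis (T : finType) (indep : {set T} -> bool) (B : {set T}) : bool :=
  maxset indep B.

Definition is_circuit (T : finType) (indep : {set T} -> bool) (C : {set T}) : bool :=
  minset (fun X => ~~ indep X) C.

(* the fundamental circuit of e w.r.t. B: the (unique) circuit contained in B ∪ {e} *)
Definition fund_circuit (T : finType) (indep : {set T} -> bool) (B : {set T}) (e : T)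
  : {set T} :=
  odflt set0 [pick C | is_circuit indep C && (C \subset e |: B)].

Definition weight (R : numDomainType) (T : finType) (w : T -> R) (X : {set T}) : R :=
  \sum_(x in X) w x.

Definition min_weight_basis (R : numDomainType) (T : finType)
  (indep : {set T} -> bool) (w : T -> R) (B : {set T}) : Prop :=
  is_basis indep B /\
  forall B' : {set T}, is_basis indep B' -> weight w B <= weight w B'.

(* An interval [lo, hi] if closed = true, or (lo, hi) if closed = false. *)
Record bitv (R : realDomainType) := BItv { ilo : R; ihi : R; iclosed : bool }.

Definition in_bitv (R : realDomainType) (I : bitv R) (x : R) : bool :=
  if iclosed I then (ilo I <= x) && (x <= ihi I) else (ilo I < x) && (x < ihi I).

Definition in_area (R : realDomainType) (s : seq (bitv R)) (x : R) : bool :=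
  has (fun I => in_bitv I x) s.

Definition area_set (R : realType) (s : seq (bitv R)) : classical_sets.set R :=
  fun x => is_true (in_area s x).

Definition lowerL (R : realType) (s : seq (bitv R)) : R := reals.inf (area_set s).
Definition upperU (R : realType) (s : seq (bitv R)) : R := reals.sup (area_set s).

Definition certificate (R : realType) (T : finType) (indep : {set T} -> bool)
  (A : T -> seq (bitv R)) (w : T -> R) (B Q : {set T}) : Prop :=
  forall w' : T -> R,
    (forall e, in_area (A e) (w' e)) ->
    (forall e, e \in Q -> w' e = w e) ->
    min_weight_basis indep w' B.

(* A basis B has minimum weight iff w f <= w e whenever e lies outside B and f
   in the fundamental circuit of e: necessity because e |: (B :\ f) is then a
   basis, sufficiency because any other basis can be exchanged step by step into
   B without its weight increasing.  Hence Q verifies B iff, for each such pair,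
   the supremum of the values f can take under assignments consistent with Q
   (w f if f \in Q, U f otherwise) is at most the infimum of the values e can
   take (w e if e \in Q, L e otherwise).  According as e \in Q or not, this says
   that e |: Fh e \subset Q, or that every w f is at most L e and F e \subset Q;
   the four conditions of the statement are this disjunction split by whether
   Fh e is empty and whether some w f exceeds L e. *)
From HB Require Import structures.
From mathcomp Require Import all_boot all_order all_algebra.
From mathcomp Require classical_sets.
From mathcomp Require Import reals.
From mathcomp Require Import ring.
Set Implicit Arguments. Unset Strict Implicit. Unset Printing Implicit Defensive.
Import Order.TTheory GRing.Theory Num.Theory.
Local Open Scope ring_scope.

Section Matroid.
Variables (T : finType) (indep : {set T} -> bool).
Hypothesis matroid_indep : is_matroid indep.

Lemma indep_subset (X Y : {set T}) : Y \subset X -> indep X -> indep Y.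
Proof. by case: matroid_indep => _ + _; apply. Qed.

Lemma indep_augment (X Y : {set T}) : indep X -> indep Y -> (#|X| < #|Y|)%N ->
  exists2 x, x \in Y :\: X & indep (x |: X).
Proof. by case: matroid_indep => _ _; apply. Qed.

Lemma indep_extend_max (S I : {set T}) : I \subset S -> indep I ->
  exists J : {set T}, [/\ I \subset J, J \subset S, indep J &
    forall x, x \in S -> x \notin J -> ~~ indep (x |: J)].
Proof.
move=> IS iI.
have := @maxset_exists _ (fun Y => [&& indep Y, I \subset Y & Y \subset S]) I.
rewrite iI subxx IS => /(_ isT) [J /maxsetP [/and3P [iJ IJ JS] Jmax] _].
exists J; split => // x xS xJ; apply/negP => ixJ.
have := Jmax (x |: J).
rewrite ixJ (subset_trans IJ (subsetUr _ _)) subUset sub1set xS JS.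
by move=> /(_ isT (subsetUr _ _)) xJE; rewrite -xJE setU11 in xJ.
Qed.

Lemma max_indep_card (S J K : {set T}) : J \subset S -> indep J ->
  (forall x, x \in S -> x \notin J -> ~~ indep (x |: J)) ->
  K \subset S -> indep K -> (#|K| <= #|J|)%N.
Proof.
move=> JS iJ Jmax KS iK; rewrite leqNgt; apply/negP => ltJK.
have [x /setDP [xK xJ] ixJ] := indep_augment iJ iK ltJK.
by move: (Jmax x (subsetP KS x xK) xJ); rewrite ixJ.
Qed.

Lemma basis_indep (B : {set T}) : is_basis indep B -> indep B.
Proof. by case/maxsetP. Qed.

Lemma basis_depU1 (B : {set T}) x : is_basis indep B -> x \notin B -> ~~ indep (x |: B).
Proof.
case/maxsetP => _ Bmax xB; apply/negP => ixB.
by move: xB; rewrite -(Bmax _ ixB (subsetUr _ _)) setU11.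
Qed.

Lemma indep_card_le_basis (B K : {set T}) : is_basis indep B -> indep K ->
  (#|K| <= #|B|)%N.
Proof.
move=> bB iK; apply: (max_indep_card (subsetT B) (basis_indep bB) _ (subsetT K) iK).
by move=> x _; apply: basis_depU1.
Qed.

Lemma basis_of_card (B J : {set T}) : is_basis indep B -> indep J ->
  (#|B| <= #|J|)%N -> is_basis indep J.
Proof.
move=> bB iJ leBJ; apply/maxsetP; split => // Y iY JY.
apply/eqP; rewrite eq_sym eqEcard JY /=.
exact: leq_trans (indep_card_le_basis bB iY) leBJ.
Qed.

Lemma basis_subset_eq (B B' : {set T}) : is_basis indep B -> is_basis indep B' ->
  B' \subset B -> B' = B.
Proof.
move=> bB bB' B'B; apply/eqP.
by rewrite eqEcard B'B (indep_card_le_basis bB' (basis_indep bB)).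
Qed.

Section FundamentalCircuit.
Variables (B : {set T}) (e : T).
Hypotheses (basis_B : is_basis indep B) (e_notin_B : e \notin B).
Let C := fund_circuit indep B e.

Lemma fund_circuitP : [/\ ~~ indep C, C \subset e |: B, e \in C &
  forall D : {set T}, D \proper C -> indep D].
Proof.
have := @minset_exists _ (fun X => ~~ indep X && (X \subset e |: B)) (e |: B).
rewrite basis_depU1 // subxx => /(_ isT) [C0 /minsetP [/andP [dC0 C0eB] C0min] _].
have circuit_C0 : is_circuit indep C0 && (C0 \subset e |: B).
  rewrite C0eB andbT; apply/minsetP; split => // D dD DC0.
  by apply: C0min => //; rewrite dD (subset_trans DC0 C0eB).
rewrite /C /fund_circuit; case: pickP => [C1 /andP [/minsetP [dC1 C1min] C1eB] | /(_ C0)];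
  last by rewrite circuit_C0.
have eC1 : e \in C1.
  apply: contraT => eC1; move: dC1; rewrite (indep_subset _ (basis_indep basis_B)) //.
  apply/subsetP => x xC1; move: (subsetP C1eB x xC1); rewrite in_setU1.
  by case/predU1P => // xe; rewrite -xe xC1 in eC1.
split => // D DC1; apply: contraT => dD.
by move: (DC1); rewrite (C1min D dD (proper_sub DC1)) properxx.
Qed.

Lemma fund_circuitD1_subset : C :\ e \subset B.
Proof.
case: fund_circuitP => _ CeB _ _; apply/subsetP => x /setD1P [xe xC].
by move: (subsetP CeB x xC); rewrite in_setU1 (negbTE xe).
Qed.

Lemma basis_exchange_fund f : f \in C :\ e -> is_basis indep (e |: (B :\ f)).
Proof.
move=> fCe; have fB := subsetP fund_circuitD1_subset f fCe.
case/setD1P: fCe => fe fC; case: fund_circuitP => dC CeB _ Cmin.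
have CfeB : C :\ f \subset e |: B := subset_trans (subsetDl _ _) CeB.
have [J [CfJ JeB iJ Jmax]] := indep_extend_max CfeB (Cmin _ (properD1 fC)).
have leBJ := max_indep_card JeB iJ Jmax (subsetUr _ _) (basis_indep basis_B).
have fJ : f \notin J.
  apply: contraT => /negPn fJ; move: dC; rewrite (indep_subset _ iJ) //.
  apply/subsetP => x xC; case: (eqVneq x f) => [-> //| xf].
  by apply: (subsetP CfJ); rewrite in_setD1 xf.
have JeBf : J \subset e |: (B :\ f).
  apply/subsetP => x xJ; move: (subsetP JeB x xJ); rewrite !in_setU1 in_setD1.
  case/predU1P => [-> | xB]; first by rewrite eqxx.
  by rewrite xB andbT; apply/orP; right; apply: contraNneq fJ => <-.
have card_eBf : #|e |: (B :\ f)| = #|B|.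
  by rewrite cardsU1 in_setD1 (negbTE e_notin_B) andbF add1n [#|B|](cardsD1 f) fB.
have -> : e |: (B :\ f) = J by apply/esym/eqP; rewrite eqEcard JeBf card_eBf leBJ.
exact: basis_of_card basis_B iJ leBJ.
Qed.

Lemma basis_exchange_into (B' : {set T}) : is_basis indep B' -> e \in B' ->
  exists2 f, f \in C :\ e & (f \notin B') && indep (f |: (B' :\ e)).
Proof.
move=> bB' eB'; case: fund_circuitP => dC _ eC Cmin.
apply/exists_inP; apply: contraT => /exists_inP noexch.
have [J [CeJ JS iJ Jmax]] := indep_extend_max (subsetUr (B' :\ e) _) (Cmin _ (properD1 eC)).
have B'e_max x : x \in (B' :\ e) :|: (C :\ e) -> x \notin B' :\ e -> ~~ indep (x |: (B' :\ e)).
  rewrite in_setU => /orP [-> //| xCe] xB'e; apply/negP => ix; apply: noexch.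
  exists x => //; rewrite ix andbT; apply: contra xB'e.
  by case/setD1P: xCe => xe _; rewrite in_setD1 xe.
have iB'e := indep_subset (subsetDl B' [set e]) (basis_indep bB').
have leJB'e := max_indep_card (subsetUl _ _) iB'e B'e_max JS iJ.
have ltB'eB' : (#|B' :\ e| < #|B'|)%N by rewrite [#|B'|](cardsD1 e) eB'.
have [g /setDP [gB' gJ] igJ] :=
  indep_augment iJ (basis_indep bB') (leq_ltn_trans leJB'e ltB'eB').
case: (eqVneq g e) => [ge | gne].
  move: dC; rewrite (indep_subset _ igJ) // ge.
  apply/subsetP => x xC; rewrite in_setU1; case: (eqVneq x e) => //= xe.
  by apply: (subsetP CeJ); rewrite in_setD1 xe.
have gS : g \in (B' :\ e) :|: (C :\ e) by rewrite in_setU in_setD1 gne gB'.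
by move: (Jmax g gS gJ); rewrite igJ.
Qed.

End FundamentalCircuit.

Section MinWeightBasis.
Variables (R : realDomainType) (w : T -> R).

Lemma weight_exchange (X : {set T}) a b : a \notin X -> b \in X ->
  weight w (a |: (X :\ b)) + w b = weight w X + w a.
Proof.
move=> aX bX; rewrite /weight big_setU1 /=; last by rewrite in_setD1 (negbTE aX) andbF.
by rewrite (big_setD1 b bX) /=; ring.
Qed.

Lemma min_weight_basis_fund_le (B : {set T}) e f : min_weight_basis indep w B ->
  e \notin B -> f \in fund_circuit indep B e :\ e -> w f <= w e.
Proof.
move=> [bB Bmin] eB fCe.
have exchange_eq := weight_exchange eB (subsetP (fund_circuitD1_subset bB eB) f fCe).
by rewrite -(lerD2l (weight w B)) -exchange_eq lerD2r Bmin // basis_exchange_fund.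
Qed.

(* Induction on #|B' :\: B|: an exchange from [basis_exchange_into] moves B'
   one element closer to B without increasing its weight. *)
Lemma fund_le_min_weight_basis (B : {set T}) : is_basis indep B ->
  (forall e f, e \notin B -> f \in fund_circuit indep B e :\ e -> w f <= w e) ->
  min_weight_basis indep w B.
Proof.
move=> bB fund_le; split => // B'.
have [n] := ubnP #|B' :\: B|; elim: n B' => // n IH B' ltB'n bB'.
have [B'B0 | [e /setDP [eB' eB]]] := set_0Vmem (B' :\: B).
  by rewrite (basis_subset_eq bB bB') // -setD_eq0 B'B0.
have [f fCe /andP [fB' ifB'e]] := basis_exchange_into bB eB bB' eB'.
have fB := subsetP (fund_circuitD1_subset bB eB) f fCe.
have card_fB'e : #|f |: (B' :\ e)| = #|B'|.
  by rewrite cardsU1 in_setD1 (negbTE fB') andbF add1n [#|B'|](cardsD1 e) eB'.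
have bfB'e : is_basis indep (f |: (B' :\ e)).
  by apply: (basis_of_card bB ifB'e); rewrite card_fB'e (indep_card_le_basis bB' (basis_indep bB)).
apply: (@le_trans _ _ (weight w (f |: (B' :\ e)))).
  apply: IH bfB'e; rewrite -ltnS; apply: leq_trans ltB'n; rewrite ltnS.
  apply: (@leq_ltn_trans #|(B' :\: B) :\ e|); last by rewrite [#|B' :\: B|](cardsD1 e) !inE eB eB'.
  apply: subset_leq_card; apply/subsetP => x; rewrite !inE.
  by case/andP=> xB /predU1P [xf | /andP [-> ->]]; [rewrite xf fB in xB | rewrite xB].
by rewrite -(lerD2r (w e)) weight_exchange // lerD2l fund_le.
Qed.

End MinWeightBasis.

End Matroid.

Section Areas.
Variables (R : realType) (s : seq (bitv R)).

Lemma in_area_ubounded : exists M, forall x, in_area s x -> x <= M.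
Proof.
elim: s => [|I s' [M HM]]; first by exists 0.
exists (Num.max (ihi I) M) => x /orP [|/HM xM]; last by rewrite le_max xM orbT.
by rewrite le_max /in_bitv; case: iclosed => /andP [_ xhi]; rewrite ?xhi // ltW.
Qed.

Lemma in_area_lbounded : exists M, forall x, in_area s x -> M <= x.
Proof.
elim: s => [|I s' [M HM]]; first by exists 0.
exists (Num.min (ilo I) M) => x /orP [|/HM Mx]; last by rewrite ge_min Mx orbT.
by rewrite ge_min /in_bitv; case: iclosed => /andP [lox _]; rewrite ?lox // ltW.
Qed.

Lemma in_area_le_upperU x : in_area s x -> x <= upperU s.
Proof.
move=> sx; apply: ub_le_sup => //.
by have [M HM] := in_area_ubounded; exists M => y /HM.
Qed.

Lemma lowerL_le_in_area x : in_area s x -> lowerL s <= x.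
Proof.
move=> sx; apply: ge_inf => //.
by have [M HM] := in_area_lbounded; exists M => y /HM.
Qed.

Lemma upperU_le c : (exists x, in_area s x) ->
  (forall x, in_area s x -> x <= c) -> upperU s <= c.
Proof. by move=> [x sx] le_c; apply: ge_sup => [|y /le_c]; first by exists x. Qed.

Lemma le_lowerL c : (exists x, in_area s x) ->
  (forall x, in_area s x -> c <= x) -> c <= lowerL s.
Proof. by move=> [x sx] c_le; apply: lb_le_inf => [|y /c_le]; first by exists x. Qed.

End Areas.

Section CircuitConditions.
Variables (R : realDomainType) (T : finType) (Q C : {set T}) (e : T).
Variables (U w : T -> R) (Le : R).

Definition circuit_verified :=
  e |: [set f in C | w e < U f] \subset Q \/
  (forall f, f \in C -> w f <= Le) /\ [set f in C | Le < U f] \subset Q.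

Lemma circuit_verifiedP :
  (forall f, f \in C -> w f <= U f) -> (forall f, f \in C -> w f <= w e) -> Le <= w e ->
  (forall f, f \in C -> (if f \in Q then w f else U f) <= (if e \in Q then w e else Le))
  <-> circuit_verified.
Proof.
move=> wU w_le_we Le_le_we; split => [le_fe | [eFhQ | [w_le_Le FQ]] f fC].
- have [eQ | eQ] := boolP (e \in Q); [left | right; split].
  + apply/subsetP => x /setU1P [-> // | ]; rewrite inE => /andP [xC].
    by apply: contraLR => xQ; rewrite -leNgt; move: (le_fe x xC); rewrite eQ (negbTE xQ).
  + move=> x xC; move: (le_fe x xC); rewrite (negbTE eQ).
    by case: ifP => // _; apply: le_trans (wU x xC).
  + apply/subsetP => x; rewrite inE => /andP [xC].
    by apply: contraLR => xQ; rewrite -leNgt; move: (le_fe x xC); rewrite (negbTE eQ) (negbTE xQ).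
- rewrite (subsetP eFhQ e (setU11 _ _)); case: ifPn => fQ; first exact: w_le_we.
  rewrite leNgt; apply: contra fQ => lt_we_Uf.
  by apply: (subsetP eFhQ); rewrite !inE fC lt_we_Uf orbT.
- have Uf_le_Le : f \notin Q -> U f <= Le.
    by move=> fQ; rewrite leNgt; apply: contra fQ => lt_Le_Uf; apply: (subsetP FQ); rewrite inE fC.
  have [fQ | fQ] := boolP (f \in Q); case: ifP => _.
  + exact: w_le_we.
  + exact: w_le_Le.
  + exact: le_trans (Uf_le_Le fQ) Le_le_we.
  + exact: Uf_le_Le.
Qed.

Lemma circuit_verifiedE : circuit_verified <->
  [/\ ((forall f, f \in C -> U f <= w e) ->
       (exists2 f', f' \in C & Le < w f') -> e \in Q),
      ((forall f, f \in C -> U f <= w e) ->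
       (forall f, f \in C -> w f <= Le) ->
       e \in Q \/ [set f in C | Le < U f] \subset Q),
      ((exists2 f, f \in C & w e < U f) ->
       (exists2 f', f' \in C & Le < w f') ->
       e |: [set f in C | w e < U f] \subset Q) &
      ((exists2 f, f \in C & w e < U f) ->
       (forall f', f' \in C -> w f' <= Le) ->
       [set f in C | Le < U f] \subset Q \/ e |: [set f in C | w e < U f] \subset Q)].
Proof.
rewrite /circuit_verified; set Fh := [set f in C | w e < U f].
have w_gt_Le_contra : (forall f, f \in C -> w f <= Le) ->
    (exists2 f', f' \in C & Le < w f') -> False.
  by move=> w_le [f' f'C]; rewrite ltNge w_le.
split=> [[eFhQ | [w_le_Le FQ]] | [H1 H2 H3 H4]].
- have eQ : e \in Q by apply: (subsetP eFhQ); rewrite setU11.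
  by split=> *; [| left | | right].
- by split=> *; [exfalso; exact: w_gt_Le_contra | right |
                 exfalso; exact: w_gt_Le_contra | left].
have U_le_we : Fh = set0 -> forall f, f \in C -> U f <= w e.
  move=> Fh0 f fC; rewrite leNgt; apply/negP => lt_we_Uf.
  have : f \in Fh by rewrite inE fC lt_we_Uf.
  by rewrite Fh0 inE.
have w_gt_or_le :
    (exists2 f', f' \in C & Le < w f') \/ (forall f, f \in C -> w f <= Le).
  have [/exists_inP w_gt_Le | /exists_inP no_w_gt_Le] := boolP [exists f' in C, Le < w f'].
    by left.
  by right=> f fC; rewrite leNgt; apply/negP => lt_Le_wf; apply: no_w_gt_Le; exists f.
have [Fh0 | [f]] := set_0Vmem Fh.
  have eQ_eFhQ : e \in Q -> e |: Fh \subset Q by rewrite Fh0 setU0 sub1set.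
  case: w_gt_or_le => [w_gt_Le | w_le_Le].
    by left; apply/eQ_eFhQ/H1 => //; exact: U_le_we.
  by case: (H2 (U_le_we Fh0) w_le_Le) => [/eQ_eFhQ | FQ]; [left | right].
rewrite inE => /andP [fC lt_we_Uf]; have Fh_ex : exists2 f, f \in C & w e < U f by exists f.
case: w_gt_or_le => [w_gt_Le | w_le_Le]; first by left; exact: H3.
by case: (H4 Fh_ex w_le_Le); [right | left].
Qed.

End CircuitConditions.

Section Certificate.
Variables (R : realType) (T : finType) (indep : {set T} -> bool).
Variables (A : T -> seq (bitv R)) (w : T -> R) (Q : {set T}).
Hypotheses (area_nonempty : forall x, exists v, in_area (A x) v)
           (w_in_area : forall x, in_area (A x) (w x)).

(* The supremum and the infimum of [w' x] over the weight assignments [w']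
   consistent with [Q]. *)
Definition upper_given x := if x \in Q then w x else upperU (A x).
Definition lower_given x := if x \in Q then w x else lowerL (A x).

Section Consistent.
Variable w' : T -> R.
Hypotheses (w'_in_area : forall x, in_area (A x) (w' x))
           (w'_consistent : forall x, x \in Q -> w' x = w x).

Lemma le_upper_given x : w' x <= upper_given x.
Proof.
by rewrite /upper_given; case: ifP => [/w'_consistent -> // | _]; apply: in_area_le_upperU.
Qed.

Lemma lower_given_le x : lower_given x <= w' x.
Proof.
by rewrite /lower_given; case: ifP => [/w'_consistent -> // | _]; apply: lowerL_le_in_area.
Qed.

End Consistent.

Lemma upper_given_le x c :
  (forall v, in_area (A x) v -> (x \in Q -> v = w x) -> v <= c) -> upper_given x <= c.
Proof.
move=> le_c; rewrite /upper_given; case: ifP => xQ; first exact: le_c.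
by apply: upperU_le => // v xv; apply: le_c => //; rewrite xQ.
Qed.

Lemma le_lower_given x c :
  (forall v, in_area (A x) v -> (x \in Q -> v = w x) -> c <= v) -> c <= lower_given x.
Proof.
move=> c_le; rewrite /lower_given; case: ifP => xQ; first exact: c_le.
by apply: le_lowerL => // v xv; apply: c_le => //; rewrite xQ.
Qed.

(* Both bounds are approached by assignments that differ from [w] only at [f] and [e]. *)
Lemma upper_given_le_lower f e : f != e ->
  (forall w', (forall x, in_area (A x) (w' x)) -> (forall x, x \in Q -> w' x = w x) ->
     w' f <= w' e) ->
  upper_given f <= lower_given e.
Proof.
move=> fe le_fe; apply: le_lower_given => b eb ebQ; apply: upper_given_le => a fa faQ.
pose w' x := if x == f then a else if x == e then b else w x.
have ef : (e == f) = false by rewrite eq_sym (negbTE fe).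
have := le_fe w'; rewrite /w' eqxx ef eqxx; apply.
  by move=> x; case: eqP => [-> // | _]; case: eqP => [-> // | _].
move=> x xQ; case: eqP => [xf | _]; first by rewrite faQ -xf.
by case: eqP => [xe | //]; rewrite ebQ -xe.
Qed.

Lemma certificateP (B : {set T}) : is_matroid indep -> is_basis indep B ->
  certificate indep A w B Q <->
  forall e f, e \notin B -> f \in fund_circuit indep B e :\ e ->
    upper_given f <= lower_given e.
Proof.
move=> matroid_indep bB; split => [verifies e f eB fCe | le_fe w' w'A w'Q].
  apply: upper_given_le_lower; first by case/setD1P: fCe.
  move=> w' w'A w'Q; exact: min_weight_basis_fund_le (verifies w' w'A w'Q) eB fCe.
apply: fund_le_min_weight_basis => // e f eB fCe.
apply: le_trans (le_upper_given w'A w'Q f) (le_trans (le_fe e f eB fCe) _).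
exact: lower_given_le.
Qed.

End Certificate.

Theorem lemma25 (R : realType) (T : finType) (indep : {set T} -> bool)
  (A : T -> seq (bitv R)) (w : T -> R) (B Q : {set T}) :
  is_matroid indep ->
  (forall e, exists x, in_area (A e) x) ->
  (forall e, in_area (A e) (w e)) ->
  min_weight_basis indep w B ->
  let L := fun e => lowerL (A e) in
  let U := fun e => upperU (A e) in
  let C' := fun e => fund_circuit indep B e :\ e in
  let F := fun e => [set f in C' e | L e < U f] in
  let Fh := fun e => [set f in C' e | w e < U f] in
  certificate indep A w B Q <->
  (forall e, e \notin B ->
     [/\ ((forall f, f \in C' e -> U f <= w e) ->
          (exists2 f', f' \in C' e & L e < w f') -> e \in Q),
         ((forall f, f \in C' e -> U f <= w e) ->
          (forall f, f \in C' e -> w f <= L e) ->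
          e \in Q \/ F e \subset Q),
         ((exists2 f, f \in C' e & w e < U f) ->
          (exists2 f', f' \in C' e & L e < w f') ->
          e |: Fh e \subset Q) &
         ((exists2 f, f \in C' e & w e < U f) ->
          (forall f', f' \in C' e -> w f' <= L e) ->
          F e \subset Q \/ e |: Fh e \subset Q)]).
Proof.
move=> matroid_indep area_nonempty w_in_area mwB L U C' F Fh.
have circuitP e : e \notin B ->
    (forall f, f \in C' e -> upper_given A w Q f <= lower_given A w Q e) <->
    circuit_verified Q (C' e) e U w (L e).
  move=> eB; apply: circuit_verifiedP => [f _ | f | ].
  - exact: in_area_le_upperU.
  - exact: min_weight_basis_fund_le mwB eB.
  - exact: lowerL_le_in_area.
apply: (iff_trans (certificateP Q area_nonempty w_in_area matroid_indep mwB.1)).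
split=> [le_fe e eB | verified e f eB].
  by apply/circuit_verifiedE; apply: (circuitP e eB).1 => f; apply: le_fe.
by apply: (circuitP e eB).2; apply/circuit_verifiedE/verified.
Qed.
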